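(* Let $G$ be a finite group and let $H$ be a non-trivial cyclic $2$-subgroup of $G$. Then $H$ is a perfect code of $G$ if and only if $H$ is not contained in any subgroup $K$ of $G$ such that $|K|/|H|=2$ and $K$ is either cyclic or generalized quaternion.
   Context: For a group $G$ with identity $e$ and an inverse-closed subset $S\subseteq G\setminus\{e\}$, the Cayley graph $\mathrm{Cay}(G,S)$ has vertex set $G$ and edges $\{g,sg\}$ for $s\in S$, $g\in G$. A perfect code in a graph is an independent set $C$ of vertices such that every vertex outside $C$ is adjacent to exactly one vertex of $C$. A subgroup $H$ of $G$ is a perfect code of $G$ if some Cayley graph of $G$ admits $H$ as a perfect code. *)

From mathcomp Require Import all_boot all_algebra all_fingroup all_solvable.
Set Implicit Arguments. Unset Strict Implicit. Unset Printing Implicit Defensive.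
Import GroupScope.

Definition cay_adj (gT : finGroupType) (S : {set gT}) (x y : gT) : bool :=
  x * y^-1 \in S.

Definition connection_set (gT : finGroupType) (G S : {set gT}) : Prop :=
  S \subset G :\ 1 /\ (forall s, s \in S -> s^-1 \in S).

Definition cay_perfect_code (gT : finGroupType) (G S C : {set gT}) : Prop :=
  [/\ C \subset G,
      (forall x y, x \in C -> y \in C -> ~~ cay_adj S x y) &
      (forall g, g \in G -> g \notin C ->
         #|[set c in C | cay_adj S g c]| = 1%N)].

Definition subgroup_perfect_code (gT : finGroupType) (G H : {set gT}) : Prop :=
  exists S : {set gT}, connection_set G S /\ cay_perfect_code G S H.

Definition gen_quaternion (gT : finGroupType) (K : {set gT}) : Prop :=
  exists2 n, 2 < n & K \isog 'Q_(2 ^ n).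

From mathcomp Require Import all_boot all_algebra all_fingroup all_solvable.
Import GroupScope.
Set Implicit Arguments. Unset Strict Implicit. Unset Printing Implicit Defensive.

(* The neighbours in H of a vertex g of Cay(G, S) are the c ∈ H with g c^-1 ∈ S, so H is
   a perfect code iff G \ H has an inverse-closed left transversal S of H: an
   inverse-closed set meeting every left coset gH outside H exactly once.

   If H < K with |K : H| = 2 and K cyclic or generalized quaternion, then K has a unique
   involution, which lies in H.  The point t of S in the coset K \ H = tH has t^2 ∈ H,
   so t^-1 is also in S ∩ tH; hence t^-1 = t, a contradiction.

   Conversely G \ H is partitioned by the sets HxH ∪ Hx^-1H, which are unions of left
   cosets, so it is enough to find a transversal in each of them.  Inside an
   inverse-closed set C on which inversion maps left cosets to left cosets, and whose
   elements y with y^-1 ∈ yH are involutions, such a transversal is chosen pair by pair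
   {y, y^-1}.  For H = <g0> cyclic, take for C the cells hxH ∩ Hxhg0 (h ∈ H) of HxH
   and their inverses: left and right cosets of HxH match up because
   H ∩ H^x = H ∩ H^(x^-1) in a cyclic group, and as h g0 h is an odd power of g0, a cell
   containing some y with y^2 ∈ H forces x to normalize H when x^2 ∈ H.  In the
   remaining case HxH = xH and K = H<x> has index 2 over H; as K is neither cyclic nor
   generalized quaternion, not all of its involutions lie in H, so xH contains an
   involution t and S = {t} works. *)

Section InvTransversal.

Variables (gT : finGroupType) (H : {group gT}).

Definition inv_transversal (U S : {set gT}) : Prop :=
  [/\ S \subset U, {in S, forall s, s^-1 \in S}
    & {in U, forall z, #|S :&: z *: H| = 1%N}].

Lemma card_cay_adj_coset (S : {set gT}) z :
  #|[set c in H | cay_adj S z c]| = #|S :&: z *: H|.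
Proof.
transitivity #|(S :&: z *: H)^-1 :* z|; last by rewrite card_rcoset card_invg.
apply: eq_card => c.
rewrite !inE /cay_adj mem_rcoset mem_invg !inE invMg invgK mem_lcoset mulKg.
by rewrite groupV andbC.
Qed.

Lemma perfect_code_inv_transversal (G : {group gT}) :
  H \subset G -> subgroup_perfect_code G H <-> exists S, inv_transversal (G :\: H) S.
Proof.
move=> sHG; split=> [[S [[sSG invS] [_ indepH codeH]]] | [S [sSGH invS trS]]].
  exists S; split=> // [|z /setDP[zG zH]]; last by rewrite -card_cay_adj_coset codeH.
  apply/subsetP=> s Ss; have /setD1P[_ sG] := subsetP sSG s Ss.
  rewrite inE sG andbT.
  apply: contraT; rewrite negbK => sH.
  by have := indepH s 1 sH (group1 H); rewrite /cay_adj invg1 mulg1 Ss.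
exists S; split; first split=> //.
- apply/subsetP=> s /(subsetP sSGH) /setDP[sG sH]; rewrite !inE sG andbT.
  by apply: contraNneq sH => ->.
- split=> // [c d cH dH|z zG zH]; last by rewrite card_cay_adj_coset trS // inE zH.
  by apply/negP=> /(subsetP sSGH) /setDP[_]; rewrite groupM ?groupV.
Qed.

Lemma inv_transversal_cover (P : {set {set gT}}) :
  trivIset P -> {in P, forall B, B * H \subset B} ->
  {in P, forall B, exists S, inv_transversal B S} ->
  exists S, inv_transversal (cover P) S.
Proof.
move=> tiP closedP trP.
have /fin_all_exists[T trT] : forall B, exists S, B \in P -> inv_transversal B S.
  by move=> B; case: (boolP (B \in P)) => [/trP[S] | _]; [exists S | exists set0].
exists (\bigcup_(B in P) T B); split.
- apply/bigcupsP=> B PB; have [sTB _ _] := trT B PB.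
  exact: subset_trans sTB (bigcup_sup B PB).
- move=> s /bigcupP[B PB TBs]; have [_ invT _] := trT B PB.
  by apply/bigcupP; exists B; rewrite ?invT.
move=> z /bigcupP[B0 PB0 zB0]; have [_ _ cardT] := trT B0 PB0.
rewrite -(cardT z zB0); apply: eq_card => w; rewrite !inE.
apply/andP/andP=> [[/bigcupP[B PB TBw] zHw] | [TB0w ->]]; last first.
  by split=> //; apply/bigcupP; exists B0.
have [sTB _ _] := trT B PB.
have B0w : w \in B0.
  case/lcosetP: zHw => h hH ->; apply: (subsetP (closedP B0 PB0)).
  exact: mem_mulg.
have <- : B = B0.
  by rewrite -(def_pblock tiP PB (subsetP sTB w TBw)) (def_pblock tiP PB0 B0w).
by split.
Qed.

Lemma inv_transversal_mulg (C S : {set gT}) :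
  S \subset C * H -> {in S, forall s, s^-1 \in S} ->
  {in C, forall c, #|S :&: c *: H| = 1%N} -> inv_transversal (C * H) S.
Proof.
move=> sSC invS trS; split=> // _ /mulsgP[c h Cc hH ->].
by rewrite lcosetM lcoset_id // trS.
Qed.

Section AddPair.

Variables (C S : {set gT}) (y : gT).
Let Y := y *: H :|: y^-1 *: H.
Hypotheses (Cy : y \in C) (CyV : y^-1 \in C) (invy : y^-1 \in y *: H -> y^-1 = y).
Hypothesis trS : inv_transversal ((C :\: Y) * H) S.

Lemma inv_transversal_add_pair : inv_transversal (C * H) ([set y; y^-1] :|: S).
Proof.
have [sSC' invS cardS] := trS.
have SnotY w c : w \in S -> c \in Y -> w \notin c *: H.
  case/(subsetP sSC')/mulsgP=> d h /setDP[_ dNY] hH -> cY.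
  have dhH : d * h \in d *: H by rewrite mem_lcoset mulKg.
  apply: contraNN dNY => /lcoset_trans cdH.
  by case/setUP: cY => /cdH; rewrite inE (lcoset_transl _ dhH) => ->; rewrite ?orbT.
apply: inv_transversal_mulg.
- rewrite subUset (subset_trans sSC') ?mulSg ?subsetDl // andbT.
  by apply/subsetP=> w /set2P[]->; apply: (subsetP (mulG_subl H C)).
- move=> w; rewrite !inE => /orP[/orP[]|] => [/eqP-> | /eqP-> | /invS ->];
    by rewrite ?invgK ?eqxx ?orbT.
move=> c Cc; case: (boolP (c \in Y)) => [cY | cNY]; last first.
  rewrite setIUl (_ : [set y; y^-1] :&: c *: H = set0) ?set0U.
    by rewrite cardS // (subsetP (mulG_subl H _)) // inE cNY.
  apply/setP=> w; rewrite !inE; apply: contraNF cNY => /andP[/orP[] /eqP-> cH];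
    by rewrite inE !(lcoset_sym H c) cH ?orbT.
have [u pair_u cuH] : exists2 u, [set y; y^-1] = [set u; u^-1] & c \in u *: H.
  by case/setUP: cY; [exists y | exists y^-1; rewrite ?invgK // setUC].
have invu : u^-1 \in u *: H -> u^-1 = u.
  have : u \in [set y; y^-1] by rewrite pair_u !inE eqxx.
  case/set2P=> ->; first exact: invy.
  by rewrite invgK lcoset_sym => /invy ->.
apply/eqP/cards1P; exists u; apply/setP=> w; rewrite pair_u !inE.
have /lcoset_eqP-> := cuH.
case: (eqVneq w u) => [-> | wNu] /=; first by rewrite lcoset_refl.
apply/andP=> -[/orP[/eqP wuV | Sw] wuH].
  by case/eqP: wNu; rewrite wuV invu -?wuV.
by case/negP: (SnotY w c Sw cY); rewrite (lcoset_eqP cuH).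
Qed.

End AddPair.

Lemma inv_transversal_pairing (C : {set gT}) :
  {in C, forall y, y^-1 \in C} ->
  {in C &, forall y1 y2, y2 \in y1 *: H -> y2^-1 \in y1^-1 *: H} ->
  {in C, forall y, y^-1 \in y *: H -> y^-1 = y} ->
  exists S, inv_transversal (C * H) S.
Proof.
elim: {C}_.+1 {-2}C (ltnSn #|C|) => // n IHn C leCn invC cosC selfC.
have [-> | [y Cy]] := set_0Vmem C.
  by exists set0; rewrite mul0g; split=> // [s|z]; rewrite inE.
set C' := C :\: (y *: H :|: y^-1 *: H).
have sC'C : C' \subset C := subsetDl _ _.
have invC' : {in C', forall w, w^-1 \in C'}.
  move=> w /setDP[Cw wNY]; rewrite inE invC // andbT.
  apply: contra wNY; rewrite !inE => /orP[wVyH | wVyVH].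
    by rewrite -[w]invgK cosC ?invC ?orbT.
  by rewrite -[w]invgK -[y in y *: H]invgK cosC ?invC.
have ltC'n : #|C'| < n.
  rewrite ltnS in leCn; apply: leq_trans (proper_card _) leCn.
  by apply/properP; split=> //; exists y; rewrite // !inE lcoset_refl.
have [S trS] := IHn C' ltC'n invC' (sub_in2 (subsetP sC'C) cosC)
  (sub_in1 (subsetP sC'C) selfC).
exists ([set y; y^-1] :|: S).
exact: inv_transversal_add_pair Cy (invC y Cy) (selfC y Cy) trS.
Qed.

End InvTransversal.

Section SymDoubleCosets.

Variables (gT : finGroupType) (H : {group gT}).

Definition sym_dcoset x := H :* x * H :|: H :* x^-1 * H.

Lemma dcoset_refl x : x \in H :* x * H.
Proof. by have := mem_mulg (rcoset_refl H x) (group1 H); rewrite mulg1. Qed.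

Lemma dcoset_eq x y : y \in H :* x * H -> H :* y * H = H :* x * H.
Proof.
case/mulsgP=> _ k /rcosetP[h hH ->] kH ->.
by rewrite !rcosetM rcoset_id // -mulgA lcoset_id.
Qed.

Lemma invg_dcoset x : (H :* x * H)^-1 = H :* x^-1 * H.
Proof. by rewrite invMg invGid invg_rcoset mulgA. Qed.

Lemma dcoset_mulG x : H :* x * H * H = H :* x * H.
Proof. by rewrite -mulgA mulGid. Qed.

Lemma dcoset_lcoset x y z : y \in z *: H -> (y \in H :* x * H) = (z \in H :* x * H).
Proof.
have sub w v : w \in H :* x * H -> v \in w *: H -> v \in H :* x * H.
  by move=> Dw /lcosetP[h hH ->]; rewrite -dcoset_mulG mem_mulg.
move=> yzH; apply/idP/idP=> [Dy | Dz]; last exact: sub Dz _.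
by apply: sub Dy _; rewrite lcoset_sym.
Qed.

Lemma mem_sym_dcoset x : x \in sym_dcoset x.
Proof. by rewrite inE dcoset_refl. Qed.

Lemma sym_dcoset_eq x y : y \in sym_dcoset x -> sym_dcoset y = sym_dcoset x.
Proof.
rewrite /sym_dcoset -!invg_dcoset => /setUP[yD | ]; first by rewrite (dcoset_eq yD).
by rewrite invg_dcoset => /dcoset_eq->; rewrite invg_dcoset invgK setUC.
Qed.

Lemma sym_dcoset_id x : x^-1 \in H :* x * H -> sym_dcoset x = H :* x * H.
Proof. by move=> xVD; rewrite /sym_dcoset (dcoset_eq xVD) setUid. Qed.

Lemma sym_dcoset_norm x : x \in 'N(H) -> x * x \in H -> sym_dcoset x = H :* x.
Proof.
move=> xN xxH; rewrite sym_dcoset_id.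
  by rewrite -mulgA -norm_rlcoset // mulgA mulGid.
by apply: (subsetP (mulG_subl _ _)); rewrite mem_rcoset -invMg groupV.
Qed.

Lemma dcoset_invP x : x^-1 \in H :* x * H -> exists2 y, y \in H :* x & y * y \in H.
Proof.
case/mulsgP=> _ k /rcosetP[h hH ->] kH xV.
exists (h * x); first by rewrite mem_rcoset mulgK.
have -> : h * x * (h * x) = h * (x * (h * x * k)) * k^-1 by rewrite !mulgA mulgK.
by rewrite -xV mulgV mulg1 groupM ?groupV.
Qed.

Lemma sym_dcoset_inv_transversal_norm x t :
  x \in 'N(H) -> x * x \in H -> t \in H :* x -> t ^+ 2 = 1 ->
  exists S, inv_transversal H (sym_dcoset x) S.
Proof.
move=> xN xxH Hxt t2; exists [set t]; rewrite sym_dcoset_norm //.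
split=> [|_ /set1P->|z Hxz]; first by rewrite sub1set.
  by rewrite inE eq_invg_mul -expg2 t2.
rewrite norm_rlcoset // in Hxt Hxz.
by rewrite (setIidPl _) ?cards1 // sub1set (lcoset_transl _ Hxt) lcoset_sym.
Qed.

Lemma sym_dcoset_mulG x : sym_dcoset x * H = sym_dcoset x.
Proof. by rewrite mulUg !dcoset_mulG. Qed.

Lemma sym_dcoset_sub (G : {group gT}) x :
  H \subset G -> x \in G :\: H -> sym_dcoset x \subset G :\: H.
Proof.
move=> sHG GHx; have sDG z : z \in G :\: H -> H :* z * H \subset G :\: H.
  case/setDP=> zG zH; apply/subsetP=> _ /mulsgP[_ k /rcosetP[h hH ->] kH ->].
  have [hG kG] := (subsetP sHG h hH, subsetP sHG k kH).
  by rewrite inE groupMr // groupMl // zH /= !groupM.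
by case/setDP: GHx => xG xH; rewrite subUset !sDG // inE ?groupV ?xH.
Qed.

Lemma inv_transversal_sym_dcosets (G : {group gT}) :
  H \subset G ->
  {in G :\: H, forall x, exists S, inv_transversal H (sym_dcoset x) S} ->
  exists S, inv_transversal H (G :\: H) S.
Proof.
move=> sHG trD; set P := [set sym_dcoset x | x in G :\: H].
have <- : cover P = G :\: H.
  apply/eqP; rewrite eqEsubset cover_imset; apply/andP; split.
    by apply/bigcupsP=> x; apply: sym_dcoset_sub.
  by apply/subsetP=> x GHx; apply/bigcupP; exists x; rewrite ?mem_sym_dcoset.
apply: inv_transversal_cover => [|_ /imsetP[x _ ->]|_ /imsetP[x GHx ->]].
- apply/trivIsetP=> _ _ /imsetP[x _ ->] /imsetP[y _ ->] neq.
  rewrite -setI_eq0; apply: contraNT neq => /set0Pn[z /setIP[xz yz]].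
  by rewrite -(sym_dcoset_eq xz) (sym_dcoset_eq yz).
- by rewrite sym_dcoset_mulG.
- exact: trD.
Qed.

End SymDoubleCosets.

Lemma cyclic_memJV (gT : finGroupType) (H : {group gT}) x w :
  cyclic H -> w \in H -> (w ^ x \in H) = (w ^ x^-1 \in H).
Proof.
move=> cycH wH; have eqI : (H :&: H :^ x^-1)%G :=: (H :&: H :^ x)%G.
  apply/eqP; rewrite (eq_subG_cyclic cycH) ?subsetIl //=.
  by rewrite -(cardJg _ x) conjIg conjsgKV setIC.
rewrite -[x in w ^ x]invgK -!mem_conjg.
by move/setP/(_ w): eqI; rewrite !inE wH.
Qed.

Lemma cycle_expg_odd (gT : finGroupType) (g : gT) k :
  2.-elt g -> odd k -> <[g ^+ k]> = <[g]>.
Proof.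
move=> g2 oddk; apply/esym/eqP; change (generator <[g]> (g ^+ k)).
rewrite generator_coprime; have [j ->] := p_natP g2.
by apply: coprimeXl; rewrite coprime2n.
Qed.

Section TwistedDiagonal.

Variables (gT : finGroupType) (H : {group gT}) (g0 x : gT).
Hypothesis defH : H :=: <[g0]>.

Definition twisted_diag := \bigcup_(h in H) ((h * x) *: H :&: H :* (x * h * g0)).

Let g0H : g0 \in H. Proof. by rewrite defH cycle_id. Qed.
Let cycH : cyclic H. Proof. by rewrite defH cycle_cyclic. Qed.
Let commH : {in H &, forall a b, commute a b}.
Proof. by move=> a b aH bH; apply: (centsP (cyclic_abelian cycH)). Qed.

Lemma twisted_diagP y :
  reflect (exists2 h, h \in H & y *: H = (h * x) *: H /\ H :* y = H :* (x * h * g0))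
          (y \in twisted_diag).
Proof.
apply: (iffP bigcupP) => -[h hH].
  by case/setIP=> /lcoset_eqP lh /rcoset_eqP rh; exists h.
by case=> lh rh; exists h; rewrite // inE -lh -rh lcoset_refl rcoset_refl.
Qed.

Lemma twisted_diag_mem h : h \in H -> h * x * (h * g0) \in twisted_diag.
Proof.
move=> hH; apply/bigcupP; exists h; rewrite // inE mem_lcoset mem_rcoset mulKg.
by rewrite groupM //= !invMg !mulgA !mulgK.
Qed.

Lemma twisted_diag_sub : twisted_diag \subset H :* x * H.
Proof.
apply/bigcupsP=> h hH; apply/subsetP=> _ /setIP[/lcosetP[k kH ->] _].
by rewrite mem_mulg // mem_rcoset mulgK.
Qed.

Lemma dcoset_twisted_diagr : H :* x * H = twisted_diag * H.
Proof.
apply/eqP; rewrite eqEsubset; apply/andP; split; last first.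
  by rewrite -dcoset_mulG mulSg ?twisted_diag_sub.
apply/subsetP=> _ /mulsgP[_ k /rcosetP[h hH ->] kH ->].
have -> : h * x * k = h * x * (h * g0) * ((h * g0)^-1 * k) by rewrite mulgA mulgK.
by rewrite mem_mulg ?twisted_diag_mem // groupM ?groupV ?groupM.
Qed.

Lemma dcoset_twisted_diagl : H :* x * H = H * twisted_diag.
Proof.
apply/eqP; rewrite eqEsubset; apply/andP; split; last first.
  by apply: subset_trans (mulgS H twisted_diag_sub) _; rewrite !mulgA mulGid.
apply/subsetP=> _ /mulsgP[_ k /rcosetP[h hH ->] kH ->].
have [h' h'H ->] : exists2 h', h' \in H & k = h' * g0.
  by exists (k * g0^-1); rewrite ?mulgKV ?groupM ?groupV.
have -> : h * x * (h' * g0) = h * h'^-1 * (h' * x * (h' * g0)) by rewrite !mulgA mulgKV.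
by rewrite mem_mulg ?twisted_diag_mem // groupM ?groupV.
Qed.

Lemma sym_dcoset_twisted :
  sym_dcoset H x = (twisted_diag :|: twisted_diag^-1) * H.
Proof.
rewrite /sym_dcoset -invg_dcoset {1}dcoset_twisted_diagr dcoset_twisted_diagl.
by rewrite invMg invGid mulUg.
Qed.

Lemma twisted_diag_coset y1 y2 : y1 \in twisted_diag -> y2 \in twisted_diag ->
  (y2 \in y1 *: H) = (y2 \in H :* y1).
Proof.
case/twisted_diagP=> h1 h1H [l1 r1] /twisted_diagP[h2 h2H [l2 r2]].
rewrite (sameP lcoset_eqP eqP) (sameP rcoset_eqP eqP) l1 l2 r1 r2.
rewrite -(sameP lcoset_eqP eqP) -(sameP rcoset_eqP eqP) mem_lcoset mem_rcoset.
have -> : (h1 * x)^-1 * (h2 * x) = (h2 * h1^-1) ^ x.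
  by rewrite -(commH (groupVr h1H) h2H) conjgE invMg !mulgA.
have -> : x * h2 * g0 * (x * h1 * g0)^-1 = (h2 * h1^-1) ^ x^-1.
  by rewrite conjgE invgK !invMg !mulgA mulgK.
by rewrite cyclic_memJV // groupM ?groupV.
Qed.

Lemma twisted_diagV y : x * x \in H -> y \in twisted_diag -> y^-1 \in twisted_diag.
Proof.
move=> xxH /twisted_diagP[h hH [lh rh]]; apply/twisted_diagP.
exists (h * g0)^-1; first by rewrite groupV groupM.
split.
  rewrite -invg_rcoset rh invg_rcoset; apply/lcoset_eqP; rewrite mem_lcoset.
  by rewrite !invMg !invgK !mulgA !mulgK -invMg groupV.
rewrite -invg_lcoset lh invg_lcoset; apply/rcoset_eqP; rewrite mem_rcoset.
by rewrite (commH hH g0H) !invMg !invgK !mulgA !mulgKV -invMg groupV.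
Qed.

Lemma twisted_diag_inv_coset y : 2.-group H -> x * x \in H ->
  y \in twisted_diag -> y^-1 \in y *: H -> x \in 'N(H).
Proof.
move=> pH xxH /twisted_diagP[h hH [lh rh]] /lcoset_eqP.
rewrite -invg_rcoset rh invg_rcoset lh => /lcoset_eqP.
rewrite mem_lcoset -invMg groupV => mH.
have gen_m : <[h * g0 * h]> = H.
  move: hH; rewrite defH => /cycleP[i ->].
  rewrite -expgSr -expgD cycle_expg_odd ?(mem_p_elt pH g0H) //.
  by rewrite addSn /= oddD addbb.
have : H :^ x^-1 \subset H.
  rewrite -{1}gen_m -cycleJ cycle_subG conjgE invgK.
  have -> : x * (h * g0 * h * x^-1) = x * h * g0 * (h * x) * (x * x)^-1.
    by rewrite invMg !mulgA mulgK.
  by rewrite groupM ?groupV.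
move=> sHxH; rewrite -groupV; apply/normP/eqP.
by rewrite eqEcard sHxH cardJg leqnn.
Qed.

Lemma sym_dcoset_inv_transversal_disjoint : x^-1 \notin H :* x * H ->
  exists S, inv_transversal H (sym_dcoset H x) S.
Proof.
move=> xVD; have DV y : y \in H :* x * H -> y^-1 \notin H :* x * H.
  move=> Dy; apply: contra xVD => DyV.
  by rewrite -mem_invg -{1}(dcoset_eq DyV) invg_dcoset invgK (dcoset_eq Dy) dcoset_refl.
have TD_D := subsetP twisted_diag_sub.
rewrite sym_dcoset_twisted; apply: inv_transversal_pairing.
- by move=> y; rewrite !inE invgK orbC.
- move=> y1 y2; rewrite !inE => C1 C2 y12.
  have sameD := dcoset_lcoset x y12.
  case/orP: C1 => T1; case/orP: C2 => T2.
  + by rewrite memV_lcosetV -twisted_diag_coset.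
  + by case/negP: (DV _ (TD_D _ T2)); rewrite invgK sameD TD_D.
  + by case/negP: (DV _ (TD_D _ T1)); rewrite invgK -sameD TD_D.
  + by rewrite twisted_diag_coset // memV_rcosetV.
- move=> y; rewrite !inE => Cy /(dcoset_lcoset x) sameD.
  case/orP: Cy => [/TD_D Dy | /TD_D DyV].
    by case/negP: (DV _ Dy); rewrite sameD.
  by case/negP: (DV _ DyV); rewrite invgK -sameD.
Qed.

Lemma sym_dcoset_inv_transversal_nonnormal : 2.-group H -> x * x \in H ->
  x \notin 'N(H) -> exists S, inv_transversal H (sym_dcoset H x) S.
Proof.
move=> pH xxH xN; have -> : sym_dcoset H x = twisted_diag * H.
  rewrite sym_dcoset_twisted; congr (_ * _); apply/setUidPl/subsetP=> y.
  by rewrite mem_invg => /(twisted_diagV xxH); rewrite invgK.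
apply: inv_transversal_pairing => [y /(twisted_diagV xxH) // | y1 y2 T1 T2 | y Ty].
  by rewrite memV_lcosetV -twisted_diag_coset.
by move/(twisted_diag_inv_coset pH xxH Ty); rewrite (negPf xN).
Qed.

End TwistedDiagonal.

Section TwoGroups.

Variable gT : finGroupType.
Implicit Types G H K : {group gT}.

Lemma index_join_cycle2 H x :
  x \in 'N(H) -> x \notin H -> x * x \in H -> #|H <*> <[x]> : H| = 2.
Proof.
move=> xN xH xxH; have nHx : <[x]> \subset 'N(H) by rewrite cycle_subG.
rewrite -card_quotient ?join_subG ?normG // quotientYidl // quotient_cycle // -orderE.
have ntx : #[coset H x] != 1%N.
  by rewrite order_eq1; apply: contra xH => /eqP; apply: coset_idr.
by apply/(prime_nt_dvdP _ ntx); rewrite // order_dvdn -morphX // expg2 /= coset_id.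
Qed.

Lemma Ldiv2_sub_cyclic_quaternion H K :
  cyclic H -> H :!=: 1 -> H \subset K -> 2.-group K ->
  'Ldiv_2(K) \subset H <-> cyclic K \/ gen_quaternion K.
Proof.
move=> cycH ntH sHK pK; have pH := pgroupS sHK pK.
have ntK : K :!=: 1 := subG1_contra sHK ntH.
rewrite -gen_subG -[2]/(2 ^ 1)%N -(OhmE 1 pK).
apply: (@iff_trans _ (#|'Ohm_1(K)| = 2)).
  rewrite -(Ohm1_cyclic_pgroup_prime cycH pH ntH); split=> [sOH | oOK].
    suff -> : 'Ohm_1(K) = 'Ohm_1(H) by [].
    have := OhmS 1 sOH; rewrite Ohm_id => sOKH.
    by apply/eqP; rewrite eqEsubset sOKH OhmS.
  have/eqP <- : 'Ohm_1(H) == 'Ohm_1(K) by rewrite eqEcard OhmS // oOK leqnn.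
  exact: Ohm_sub.
split=> [/(prime_Ohm1P pK ntK)/orP[-> | /andP[_ /eqP/quaternion_classP]] | cqK].
- by left.
- by right.
apply/(prime_Ohm1P pK ntK); case: cqK => [-> // | /quaternion_classP->].
by rewrite orbT.
Qed.

Lemma inv_transversal_index2_involution G H K S :
  H \subset K -> K \subset G -> #|K : H| = 2 -> inv_transversal H (G :\: H) S ->
  exists2 t, t \in K :\: H & t ^+ 2 = 1.
Proof.
move=> sHK sKG iKH [_ invS trS].
have [g Kg gH] : exists2 g, g \in K & g \notin H.
  by apply/subsetPn; rewrite -indexg_gt1 iKH.
have /cards1P[t StgH] : #|S :&: g *: H| == 1%N.
  by rewrite trS // inE gH (subsetP sKG).
have /setIP[St tgH] : t \in S :&: g *: H by rewrite StgH set11.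
have KHt : t \in K :\: H.
  by case/lcosetP: tgH => h hH ->; rewrite inE groupMr // gH groupM // (subsetP sHK).
exists t => //; rewrite expg2.
have : t^-1 \in S :&: g *: H.
  rewrite inE invS //; apply: (lcoset_trans _ tgH).
  rewrite mem_lcoset -mem_rcoset (rcoset_index2 sHK iKH KHt).
  by move: KHt; rewrite !inE !groupV.
by rewrite StgH => /set1P tVt; rewrite -{1}tVt mulVg.
Qed.

Lemma sym_dcoset_inv_transversal G H x :
  H \subset G -> cyclic H -> 2.-group H -> H :!=: 1 ->
  ~ (exists K : {group gT},
       [/\ K \subset G, H \subset K, #|K| = (2 * #|H|)%N &
           (cyclic K \/ gen_quaternion K)]) ->
  x \in G :\: H -> exists S, inv_transversal H (sym_dcoset H x) S.
Proof.
move=> sHG cycH pH ntH noK GHx; have [g0 defH] := cyclicP cycH.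
have [xVD | ] := boolP (x^-1 \in H :* x * H); last first.
  exact: sym_dcoset_inv_transversal_disjoint defH.
have [y Hxy yyH] := dcoset_invP xVD.
have Dy : y \in sym_dcoset H x by rewrite inE (subsetP (mulG_subl H _)).
have /setDP[yG yH] := subsetP (sym_dcoset_sub sHG GHx) y Dy.
rewrite -(sym_dcoset_eq Dy).
have [yN | ] := boolP (y \in 'N(H)); last first.
  exact: sym_dcoset_inv_transversal_nonnormal defH pH yyH.
set K := (H <*> <[y]>)%G; have iKH : #|K : H| = 2 := index_join_cycle2 yN yH yyH.
have sHK : H \subset K := joing_subl _ _.
have Ky : y \in K by rewrite -cycle_subG joing_subr.
have : ~~ ('Ldiv_2(K) \subset H).
  apply/negP=> /(Ldiv2_sub_cyclic_quaternion cycH ntH sHK) cqK; apply: noK.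
  exists K; split=> //; first by rewrite join_subG sHG cycle_subG.
    by rewrite -(Lagrange sHK) iKH mulnC.
  by apply: cqK; rewrite /pgroup -(Lagrange sHK) iKH pnatM pnat_id // andbT.
case/subsetPn=> t /LdivP[Kt t2] tH.
apply: (sym_dcoset_inv_transversal_norm yN yyH _ t2).
by rewrite (rcoset_index2 sHK iKH) ?inE ?yH ?tH.
Qed.

End TwoGroups.

Theorem lemma3p2 (gT : finGroupType) (G H : {group gT}) :
  H \subset G -> cyclic H -> 2.-group H -> H :!=: 1 ->
  (subgroup_perfect_code G H <->
   ~ (exists K : {group gT},
        [/\ K \subset G, H \subset K, #|K| = (2 * #|H|)%N &
            (cyclic K \/ gen_quaternion K)])).
Proof.
move=> sHG cycH pH ntH; apply: iff_trans (perfect_code_inv_transversal sHG) _.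
split=> [[S trS] [K [sKG sHK oK cqK]] | noK].
  have iKH : #|K : H| = 2 by rewrite -(divgS sHK) oK mulnK.
  have pK : 2.-group K by rewrite /pgroup oK pnatM pnat_id.
  have [t /setDP[Kt tH] t2] := inv_transversal_index2_involution sHK sKG iKH trS.
  have /(Ldiv2_sub_cyclic_quaternion cycH ntH sHK pK)/subsetP sLH := cqK.
  by case/negP: tH; apply: sLH; apply/LdivP.
apply: inv_transversal_sym_dcosets => // x.
exact: sym_dcoset_inv_transversal.
Qed.
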